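(* For the OGD-CB algorithm (with any value sequence and any realization of competing bids), for every $t\le T_0+1$ we have $\lambda_t\in[0,\bar v/\rho-1]$.
   Context: Model: constants $\bar v>0$, $\rho\in(0,\bar v]$; $T$ rounds; budget $B=\rho T$. Round $t$: value $v_t\in[0,\bar v]$, highest competing bid $p_t\in[0,\bar v]$; buyer picks $x_t\in\{0,1\}$, pays $x_tc_t$ with $c_t=p_t\mathbf 1[v_t\ge p_t]$. Full information: $p_t$ observed every round; partial information: $p_t$ observed only when $x_t=1$. OGD-CB algorithm: $\mathcal I_1=\emptyset$, $B_1=B$, $\lambda_1=0$. For $t=1,\dots,T$: observe $v_t$. If $t=1$: $x_1=1$, $\lambda_2=\lambda_1$. Otherwise: $\epsilon_t=\sqrt{(\ln 2+2\ln T)/(2|\mathcal I_t|)}$; $\tilde r_t(v)=\frac1{|\mathcal I_t|}\sum_{\tau\in\mathcal I_t}(v-p_\tau)^++\epsilon_tv$; $\tilde c_t(v)=\frac1{|\mathcal I_t|}\sum_{\tau\in\mathcal I_t}p_\tau\mathbf 1[v\ge p_\tau]-2\epsilon_tv$; $x_t=\mathbf 1[\tilde r_t(v_t)\ge\lambda_t\tilde c_t(v_t)]$; $\eta_t=1/(\bar v\sqrt t)$; $\lambda_{t+1}=(\lambda_t+\eta_t(x_t\tilde c_t(v_t)-\rho))^+$. If (full information) or (partial information and $x_t=1$) observe $p_t$ and set $\mathcal I_{t+1}=\mathcal I_t\cup\{t\}$, else $\mathcal I_{t+1}=\mathcal I_t$. Set $B_{t+1}=B_t-x_tc_t$; if $B_{t+1}<\bar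 v$, stop. $T_0$ is the stopping round (or $T$). *)

From HB Require Import structures.
From mathcomp Require Import all_boot all_order all_algebra.
From mathcomp Require Import reals exp.
Set Implicit Arguments. Unset Strict Implicit. Unset Printing Implicit Defensive.
Import Order.TTheory GRing.Theory Num.Theory.
Local Open Scope ring_scope.

Section OGDCB.
Variables (R : realType) (vbar rho : R) (T : nat) (full : bool)
          (v p : nat -> R).

Definition pos (x : R) : R := Num.max 0 x.

Definition cost (t : nat) : R := if p t <= v t then p t else 0.

(* state at the beginning of a round: (I_t, B_t, lambda_t) *)
Definition state := (seq nat * R * R)%type.

Definition avg (I : seq nat) (f : nat -> R) : R :=
  (\sum_(tau <- I) f tau) / (size I)%:R.

Definition eps (I : seq nat) : R :=
  Num.sqrt ((ln 2 + 2 * ln (T%:R)) / (2 * (size I)%:R)).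

Definition rtilde (I : seq nat) (x : R) : R :=
  avg I (fun tau => pos (x - p tau)) + eps I * x.

Definition ctilde (I : seq nat) (x : R) : R :=
  avg I (fun tau => if p tau <= x then p tau else 0) - 2 * eps I * x.

Definition eta (t : nat) : R := (vbar * Num.sqrt (t%:R))^-1.

Definition decide (t : nat) (s : state) : bool :=
  let: (Is, _, lam) := s in
  if t == 1%N then true else lam * ctilde Is (v t) <= rtilde Is (v t).

(* one round t of OGD-CB (without the stopping rule) *)
Definition step (t : nat) (s : state) : state :=
  let: (Is, B, lam) := s in
  let x := decide t s in
  let lam' := if t == 1%N then lam
              else pos (lam + eta t * ((if x then ctilde Is (v t) else 0) - rho)) in
  let I' := if full || x then rcons Is t else Is in
  let B' := B - (if x then cost t else 0) in
  (I', B', lam').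

(* st t = state at the beginning of round t (for t >= 1); st 0 = st 1 = init *)
Fixpoint st (t : nat) : state :=
  match t with
  | 0 => ([::], rho * T%:R, 0)
  | t'.+1 => if t' == 0%N then ([::], rho * T%:R, 0) else step t' (st t')
  end.

Definition Ind (t : nat) : seq nat := (st t).1.1.
Definition Bud (t : nat) : R := (st t).1.2.
Definition lambda (t : nat) : R := (st t).2.

(* stopping round T_0: first t in 1..T with B_{t+1} < vbar, or T otherwise.
   Up to round T_0 the run with stopping coincides with st. *)
Definition T0 : nat := head T [seq t <- iota 1 T | Bud t.+1 < vbar].

End OGDCB.

(* Whenever the buyer wins, the bidding rule gives lam * c <= r, while the
   optimistic estimates satisfy r + c <= v_t <= vbar; hence (lam + 1) c <= vbar.
   The projected gradient step lam + eta_t (c - rho), with eta_t <= 1/vbar, then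
   never exceeds vbar/rho - 1; a losing round only decreases lam, and the
   projection keeps it nonnegative. *)

From Pilot Require Import Defs.
From HB Require Import structures.
From mathcomp Require Import all_boot all_order all_algebra.
From mathcomp Require Import reals exp.
From mathcomp Require Import ring lra.
Set Implicit Arguments. Unset Strict Implicit. Unset Printing Implicit Defensive.
Import Order.TTheory GRing.Theory Num.Theory.
Local Open Scope ring_scope.

Lemma avg_le_cst (R : realType) (I : seq nat) (f : nat -> R) (a : R) :
  0 <= a -> (forall tau, f tau <= a) -> avg I f <= a.
Proof.
move=> a_ge0 f_le; rewrite /avg.
case: I => [|tau I]; first by rewrite big_nil mul0r.
rewrite ler_pdivrMr ?ltr0Sn // mulrC mulr_natl.
rewrite -[_ *+ _]addr0 -iter_addr -count_predT -big_const_seq.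
exact: ler_sum.
Qed.

Lemma avgD (R : realType) (I : seq nat) (f g : nat -> R) :
  avg I (fun tau => f tau + g tau) = avg I f + avg I g.
Proof. by rewrite /avg big_split /= mulrDl. Qed.

Lemma eq_avg (R : realType) (I : seq nat) (f g : nat -> R) :
  f =1 g -> avg I f = avg I g.
Proof. by move=> fg; rewrite /avg (eq_bigr g). Qed.

Lemma pos_add_if_le (R : realType) (x y : R) :
  pos (x - y) + (if y <= x then y else 0) = if y <= x then x else 0.
Proof.
rewrite /pos; case: leP => [y_le_x|x_lt_y].
  by rewrite max_r ?subr_ge0 // subrK.
by rewrite max_l ?addr0 // subr_le0 ltW.
Qed.

Section Estimators.
Variables (R : realType) (T : nat) (p : nat -> R) (I : seq nat) (x : R).
Hypothesis x_ge0 : 0 <= x.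

Lemma eps_mul_ge0 : 0 <= eps R T I * x.
Proof. by rewrite mulr_ge0 ?sqrtr_ge0. Qed.

Lemma ctilde_le : ctilde T p I x <= x.
Proof.
have avg_le : avg I (fun tau => if p tau <= x then p tau else 0) <= x.
  by apply: avg_le_cst => // tau; case: ifP.
rewrite /ctilde -mulrA; have := eps_mul_ge0; lra.
Qed.

Lemma rtilde_add_ctilde_le : rtilde T p I x + ctilde T p I x <= x.
Proof.
have avg_le : avg I (fun tau => if p tau <= x then x else 0) <= x.
  by apply: avg_le_cst => // tau; case: ifP.
rewrite /rtilde /ctilde addrACA -avgD.
rewrite (eq_avg I (fun tau => pos_add_if_le x (p tau))).
rewrite -mulrA; have := eps_mul_ge0; lra.
Qed.

End Estimators.

Lemma eta_ge0 (R : realType) (vbar : R) (t : nat) : 0 <= vbar -> 0 <= Defs.eta vbar t.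
Proof. by move=> vbar_ge0; rewrite invr_ge0 mulr_ge0 ?sqrtr_ge0. Qed.

Lemma eta_mul_le1 (R : realType) (vbar : R) (t : nat) :
  0 < vbar -> (0 < t)%N -> Defs.eta vbar t * vbar <= 1.
Proof.
move=> vbar_gt0 t_gt0.
have sqrt_ge1 : 1 <= Num.sqrt (t%:R : R) by rewrite -{1}sqrtr1 ler_sqrt // ler1n.
rewrite /Defs.eta invfM mulrAC mulVf ?gt_eqF // mul1r invf_le1 //.
exact: lt_le_trans sqrt_ge1.
Qed.

Lemma pos_ge0 (R : realType) (x : R) : 0 <= pos x.
Proof. by rewrite /pos le_max lexx. Qed.

(* For g > rho, multiply the goal rho (lam + 1 + e (g - rho)) <= vbar by g:
   rho (lam + 1) g <= rho vbar, and rho e g <= rho <= vbar bounds the slope. *)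
Lemma pos_step_le (R : realType) (vbar rho lam g e : R) :
  0 < rho -> rho <= vbar -> lam <= vbar / rho - 1 ->
  0 <= e -> e * vbar <= 1 -> g <= vbar -> (lam + 1) * g <= vbar ->
  pos (lam + e * (g - rho)) <= vbar / rho - 1.
Proof.
move=> rho_gt0 rho_le_vbar lam_le e_ge0 e_le g_le_vbar afford.
have bound_ge0 : 0 <= vbar / rho - 1 by rewrite subr_ge0 ler_pdivlMr // mul1r.
rewrite /pos ge_max bound_ge0 /=.
have [g_le_rho|rho_lt_g] := lerP g rho.
  have : e * (g - rho) <= 0 by rewrite mulr_ge0_le0 ?subr_le0.
  lra.
have g_gt0 : 0 < g := lt_trans rho_gt0 rho_lt_g.
have e_g_le1 : e * g <= 1 by apply: le_trans e_le; rewrite ler_wpM2l.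
have price : rho * ((lam + 1) * g) <= rho * vbar by rewrite ler_wpM2l ?(ltW rho_gt0).
have slope : (g - rho) * (rho * (e * g)) <= (g - rho) * vbar.
  rewrite ler_wpM2l ?subr_ge0 ?(ltW rho_lt_g) //.
  exact: le_trans (ler_piMr (ltW rho_gt0) e_g_le1) rho_le_vbar.
rewrite lerBrDr ler_pdivlMr // -(ler_pM2l g_gt0).
have -> : g * ((lam + e * (g - rho) + 1) * rho) =
          rho * ((lam + 1) * g) + (g - rho) * (rho * (e * g)) by ring.
lra.
Qed.

Section DualVariableBound.
Variables (R : realType) (vbar rho : R) (T : nat) (full : bool) (v p : nat -> R).
Hypotheses (rho_gt0 : 0 < rho) (rho_le_vbar : rho <= vbar).
Hypothesis v_range : forall t, 0 <= v t <= vbar.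

Let vbar_gt0 : 0 < vbar := lt_le_trans rho_gt0 rho_le_vbar.
Let in_range (lam : R) := 0 <= lam <= vbar / rho - 1.

Lemma in_range0 : in_range 0.
Proof. by rewrite /in_range lexx subr_ge0 ler_pdivlMr // mul1r. Qed.

Lemma step_in_range (t : nat) (s : state R) :
  (0 < t)%N -> in_range s.2 -> in_range (step vbar rho T full v p t s).2.
Proof.
case: s => [[I B] lam] t_gt0 /andP[lam_ge0 lam_le] /=.
case: eqP => [_|/eqP t_neq1]; first by apply/andP.
have [v_ge0 v_le] := andP (v_range t).
rewrite /in_range pos_ge0 /=.
apply: pos_step_le => //; first exact: eta_ge0 (ltW vbar_gt0).
- exact: eta_mul_le1.
- by case: ifP => _; [exact: le_trans (ctilde_le _ _ _ v_ge0) v_le|exact: ltW].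
- (* [case: eqP] above also resolved the test [t == 1] hidden in [decide],
     so [won] is the bidding rule [lam * c <= r]. *)
  case: ifP => [won|_]; last by rewrite mulr0 ltW.
  apply: le_trans v_le; apply: le_trans (rtilde_add_ctilde_le T p I v_ge0).
  rewrite mulrDl mul1r lerD2r; exact: won.
Qed.

Lemma lambda_in_range (t : nat) : in_range (lambda vbar rho T full v p t).
Proof.
elim: t => [|[|t] IH]; try exact: in_range0.
exact: step_in_range.
Qed.

End DualVariableBound.

Theorem lemma2 (R : realType) (vbar rho : R) (T : nat) (full : bool)
    (v p : nat -> R) :
  0 < vbar -> 0 < rho -> rho <= vbar ->
  (forall t, 0 <= v t <= vbar) -> (forall t, 0 <= p t <= vbar) ->
  forall t : nat, (1 <= t <= (T0 vbar rho T full v p).+1)%N ->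
    0 <= lambda vbar rho T full v p t <= vbar / rho - 1.
Proof.
(* The invariant holds in every round; neither the stopping time nor the bids matter. *)
move=> _ rho_gt0 rho_le_vbar v_range _ t _.
exact: lambda_in_range.
Qed.
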